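(* Let $N\ge2$ be an integer, $u=1/N$, and $\mathscr{C}_k^u:=F^{-(k-1)}[u,1]$. Then \[\sum_{k=1}^n\lambda(\mathscr{C}_{k+1}^u)\log\!\left(1-\frac{k}{n+N}\right)=O\!\left(\frac{n}{\log n}\right)\qquad(n\to\infty).\]
   Context: $\lambda$ is Lebesgue measure; $F$ is the Farey map, $F(x)=x/(1-x)$ for $0\le x\le1/2$, $F(x)=(1-x)/x$ for $1/2<x\le1$; $F^{-k}$ denotes preimage under the $k$-th iterate. *)

From Stdlib Require Import Reals Lra Lia.
Open Scope R_scope.

Definition farey (x : R) : R :=
  if Rle_dec x (1/2) then x / (1 - x) else (1 - x) / x.

Definition farey_cyl (u : R) (k : nat) (x : R) : Prop :=
  0 <= x <= 1 /\ u <= Nat.iter (k - 1) farey x <= 1.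

Definition interval_cover_length (A : R -> Prop) (s : R) : Prop :=
  exists a b : nat -> R,
    (forall i, a i <= b i) /\
    (forall x, A x -> exists i, a i < x < b i) /\
    infinite_sum (fun i => b i - a i) s.

(* m is the Lebesgue (outer) measure of A: the infimum of total lengths of
   countable open-interval covers of A. *)
Definition lebesgue_measure_is (A : R -> Prop) (m : R) : Prop :=
  (forall s, interval_cover_length A s -> m <= s) /\
  (forall m', (forall s, interval_cover_length A s -> m' <= s) -> m' <= m).

(* Write [r_k = λ(F^{-k}[1/2, 1])].  The measure of [F^{-k}[a, b]] is the total
   length of its preimage intervals under the two inverse branches [x/(1+x)] and
   [1/(1+x)].  Cutting [[1/N, 1]] into the strips [[1/(m+2), 1/(m+1)]], each carried
   onto [[1/2, 1]] by [m] applications of [x/(1+x)], gives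
   [λ(C^u_{k+1}) <= r_k + ... + r_{k+N-2}].  The renewal decomposition of
   [1 = λ(F^{-k}[0, 1])] together with [λ(F^{-i}[d/(d+1), 1]) >= r_i/(d+1)] yields
   [Σ_{i<k} r_i/(k-i+1) <= 1], and double counting turns this into
   [r_a + ... + r_{a+t-1} <= 2t / log((t+2)/2)] for every block.  Finally
   [-log(1 - K/M) <= Σ_{i<=K} 1/(M-i)]; exchanging sums reduces the claim to
   [Σ_{l<=n} 1/log((l+2)/2) = O(n / log n)], which follows by splitting at [l = √n]. *)

From Stdlib Require Import Reals Lra Lia Psatz List.
Open Scope R_scope.

Fixpoint rsum (a n : nat) (f : nat -> R) : R :=
  match n with O => 0 | S n' => rsum a n' f + f (a + n')%nat end.

Lemma rsum_ext a n f g :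
  (forall i, (a <= i < a + n)%nat -> f i = g i) -> rsum a n f = rsum a n g.
Proof.
  induction n as [|n IH]; intros H; simpl; [reflexivity|].
  rewrite IH by (intros; apply H; lia). rewrite H by lia; reflexivity.
Qed.

Lemma rsum_le a n f g :
  (forall i, (a <= i < a + n)%nat -> f i <= g i) -> rsum a n f <= rsum a n g.
Proof.
  induction n as [|n IH]; intros H; simpl; [lra|].
  assert (rsum a n f <= rsum a n g) by (apply IH; intros; apply H; lia).
  specialize (H (a + n)%nat ltac:(lia)); lra.
Qed.

Lemma rsum_const a n c : rsum a n (fun _ => c) = INR n * c.
Proof. induction n as [|n IH]; simpl rsum; [simpl; lra|]. rewrite IH, S_INR; lra. Qed.

Lemma rsum_nonneg a n f : (forall i, (a <= i < a + n)%nat -> 0 <= f i) -> 0 <= rsum a n f.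
Proof.
  intros H. rewrite <- (Rmult_0_r (INR n)), <- (rsum_const a n 0). now apply rsum_le.
Qed.

Lemma rsum_plus a n f g : rsum a n (fun i => f i + g i) = rsum a n f + rsum a n g.
Proof. induction n as [|n IH]; simpl; [lra|]. rewrite IH; lra. Qed.

Lemma rsum_scal a n c f : rsum a n (fun i => c * f i) = c * rsum a n f.
Proof. induction n as [|n IH]; simpl; [lra|]. rewrite IH; lra. Qed.

Lemma rsum_split a n m f : rsum a (n + m) f = rsum a n f + rsum (a + n) m f.
Proof.
  induction m as [|m IH]; simpl; [rewrite Nat.add_0_r; lra|].
  rewrite Nat.add_succ_r; simpl. rewrite IH, Nat.add_assoc; lra.
Qed.

Lemma rsum_shift a n m f : rsum a n (fun i => f (i + m)%nat) = rsum (a + m) n f.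
Proof.
  induction n as [|n IH]; simpl; [lra|].
  rewrite IH. replace (a + n + m)%nat with (a + m + n)%nat by lia; lra.
Qed.

Lemma rsum_cons a n f : rsum a (S n) f = f a + rsum (S a) n f.
Proof.
  replace (S n) with (1 + n)%nat by lia. rewrite rsum_split.
  simpl; rewrite Nat.add_0_r, Nat.add_1_r; lra.
Qed.

Lemma rsum_swap a n b m (F : nat -> nat -> R) :
  rsum a n (fun i => rsum b m (F i)) = rsum b m (fun j => rsum a n (fun i => F i j)).
Proof.
  induction n as [|n IH]; simpl.
  - rewrite rsum_const; ring.
  - rewrite IH, <- rsum_plus; reflexivity.
Qed.

Lemma rsum_le_longer a n m f :
  (m <= n)%nat -> (forall i, (a <= i < a + n)%nat -> 0 <= f i) -> rsum a m f <= rsum a n f.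
Proof.
  intros Hmn H. replace n with (m + (n - m))%nat by lia. rewrite rsum_split.
  assert (0 <= rsum (a + m) (n - m) f) by (apply rsum_nonneg; intros; apply H; lia). lra.
Qed.

Lemma sum_f_R0_rsum f n : sum_f_R0 f n = rsum 0 (S n) f.
Proof. induction n as [|n IH]; simpl; [lra|]. now rewrite IH. Qed.

Lemma rsum_exchange_triangle (Q g : nat -> R) n :
  rsum 1 n (fun K => Q K * rsum 1 K g) = rsum 1 n (fun i => g i * rsum i (n - i + 1) Q).
Proof.
  induction n as [|n IH]; [reflexivity|].
  change (rsum 1 (S n) ?f) with (rsum 1 n f + f (1 + n)%nat). rewrite IH.
  change (rsum 1 (1 + n) g) with (rsum 1 n g + g (1 + n)%nat).
  rewrite (rsum_ext 1 n (fun i => g i * rsum i (S n - i + 1) Q)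
                        (fun i => g i * rsum i (n - i + 1) Q + Q (S n) * g i)).
  - rewrite rsum_plus, rsum_scal.
    replace (S n - (1 + n) + 1)%nat with 1%nat by lia. simpl. rewrite Nat.add_0_r; ring.
  - intros i Hi. replace (S n - i + 1)%nat with (S (n - i + 1)) by lia. simpl.
    replace (i + (n - i + 1))%nat with (S n) by lia; ring.
Qed.

Lemma Rdiv_nonneg_pos a b : 0 <= a -> 0 < b -> 0 <= a / b.
Proof. intros. apply Rmult_le_pos; [lra | left; now apply Rinv_0_lt_compat]. Qed.

Lemma ln_le x y : 0 < x -> x <= y -> ln x <= ln y.
Proof. intros H [Hl | <-]; [left; now apply ln_increasing | lra]. Qed.

Lemma ln_pos x : 1 < x -> 0 < ln x.
Proof. intros H. rewrite <- ln_1. apply ln_increasing; lra. Qed.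

Lemma ln_1p_le x : 0 < 1 + x -> ln (1 + x) <= x.
Proof.
  intros H. rewrite <- (ln_exp x) at 2. apply ln_le; [lra|].
  destruct (exp_ineq1_le x); lra.
Qed.

Lemma ln_le_harmonic t : ln ((INR t + 2) / 2) <= rsum 1 t (fun s => / INR (S s)).
Proof.
  induction t as [|t IH]; cbn [rsum].
  - replace ((INR 0 + 2) / 2) with 1 by (simpl; field). rewrite ln_1; lra.
  - pose proof (pos_INR t).
    replace ((INR (S t) + 2) / 2) with ((INR t + 2) / 2 * (1 + / (INR t + 2)))
      by (rewrite S_INR; field; lra).
    assert (0 < / (INR t + 2)) by (apply Rinv_0_lt_compat; lra).
    rewrite ln_mult by (lra || (apply Rdiv_lt_0_compat; lra)).
    pose proof (ln_1p_le (/ (INR t + 2)) ltac:(lra)).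
    replace (INR (S (1 + t))) with (INR t + 2) by (rewrite S_INR, plus_INR; simpl; lra). lra.
Qed.

Lemma neg_ln_le_harmonic M K :
  (K < M)%nat -> - ln (1 - INR K / INR M) <= rsum 1 K (fun i => / (INR M - INR i)).
Proof.
  induction K as [|K IH]; intros HK; cbn [rsum].
  - replace (1 - INR 0 / INR M) with 1 by (simpl; unfold Rdiv; ring). rewrite ln_1; lra.
  - assert (HM : INR K + 1 < INR M) by (rewrite <- S_INR; apply lt_INR; lia).
    pose proof (pos_INR K).
    replace (1 - INR (S K) / INR M)
      with ((1 - INR K / INR M) * / (1 + / (INR M - INR K - 1))) by (rewrite S_INR; field; lra).
    assert (0 < / (INR M - INR K - 1)) by (apply Rinv_0_lt_compat; lra).
    assert (0 < 1 - INR K / INR M).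
    { replace (1 - INR K / INR M) with ((INR M - INR K) / INR M) by (field; lra).
      apply Rdiv_lt_0_compat; lra. }
    rewrite ln_mult, ln_Rinv by (try apply Rinv_0_lt_compat; lra).
    pose proof (ln_1p_le (/ (INR M - INR K - 1)) ltac:(lra)).
    replace (INR (1 + K)) with (INR K + 1) by (rewrite plus_INR; simpl; ring).
    replace (INR M - (INR K + 1)) with (INR M - INR K - 1) by ring.
    specialize (IH ltac:(lia)); lra.
Qed.

(** * Preimages of intervals under the Farey map *)

Definition farey_inv_l (x : R) : R := x / (1 + x).
Definition farey_inv_r (x : R) : R := 1 / (1 + x).

Lemma farey_inv_l_nonneg x : 0 <= x -> 0 <= farey_inv_l x.
Proof. intros. unfold farey_inv_l. apply Rdiv_nonneg_pos; lra. Qed.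

Lemma farey_inv_r_pos x : 0 <= x -> 0 < farey_inv_r x.
Proof. intros. unfold farey_inv_r. apply Rdiv_lt_0_compat; lra. Qed.

Lemma farey_inv_l_le x y : 0 <= x -> x <= y -> farey_inv_l x <= farey_inv_l y.
Proof.
  intros. unfold farey_inv_l. apply (Rmult_le_reg_r ((1 + x) * (1 + y))); [nra|].
  field_simplify; lra.
Qed.

Lemma farey_inv_r_le x y : 0 <= x -> x <= y -> farey_inv_r y <= farey_inv_r x.
Proof.
  intros. unfold farey_inv_r. apply (Rmult_le_reg_r ((1 + x) * (1 + y))); [nra|].
  field_simplify; lra.
Qed.

Lemma farey_inv_l_le1 x : 0 <= x -> farey_inv_l x <= 1.
Proof. intros. unfold farey_inv_l. apply (Rmult_le_reg_r (1 + x)); [lra|]. field_simplify; lra. Qed.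

Lemma farey_inv_r_le1 x : 0 <= x -> farey_inv_r x <= 1.
Proof. intros. unfold farey_inv_r. apply (Rmult_le_reg_r (1 + x)); [lra|]. field_simplify; lra. Qed.

Lemma farey_range y : 0 <= y <= 1 -> 0 <= farey y <= 1.
Proof.
  intros H. unfold farey. destruct (Rle_dec y (1/2)).
  - split; [apply Rdiv_nonneg_pos; lra|].
    apply (Rmult_le_reg_r (1 - y)); [lra|]. field_simplify; lra.
  - split; [apply Rdiv_nonneg_pos; lra|].
    apply (Rmult_le_reg_r y); [lra|]. field_simplify; lra.
Qed.

Lemma iter_farey_range k x : 0 <= x <= 1 -> 0 <= Nat.iter k farey x <= 1.
Proof. intros H; induction k; simpl; auto using farey_range. Qed.

Lemma farey_preimage y a b : 0 <= y <= 1 -> 0 <= a -> a <= farey y <= b ->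
  farey_inv_l a <= y <= farey_inv_l b \/ farey_inv_r b <= y <= farey_inv_r a.
Proof.
  intros Hy Ha. unfold farey, farey_inv_l, farey_inv_r.
  destruct (Rle_dec y (1/2)); intros [H1 H2]; [left | right].
  - assert (E : y / (1 - y) * (1 - y) = y) by (field; lra).
    assert (a * (1 - y) <= y) by (rewrite <- E at 2; apply Rmult_le_compat_r; lra).
    assert (y <= b * (1 - y)) by (rewrite <- E at 1; apply Rmult_le_compat_r; lra).
    split; [apply (Rmult_le_reg_r (1 + a)) | apply (Rmult_le_reg_r (1 + b))];
      try lra; field_simplify; lra.
  - assert (E : (1 - y) / y * y = 1 - y) by (field; lra).
    assert (a * y <= 1 - y) by (rewrite <- E; apply Rmult_le_compat_r; lra).
    assert (1 - y <= b * y) by (rewrite <- E; apply Rmult_le_compat_r; lra).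
    split; [apply (Rmult_le_reg_r (1 + b)) | apply (Rmult_le_reg_r (1 + a))];
      try lra; field_simplify; lra.
Qed.

Fixpoint preimage_intervals (k : nat) (a b : R) : list (R * R) :=
  match k with
  | O => (a, b) :: nil
  | S k' => preimage_intervals k' (farey_inv_l a) (farey_inv_l b) ++
            preimage_intervals k' (farey_inv_r b) (farey_inv_r a)
  end.

Fixpoint preimage_length (k : nat) (a b : R) : R :=
  match k with
  | O => b - a
  | S k' => preimage_length k' (farey_inv_l a) (farey_inv_l b) +
            preimage_length k' (farey_inv_r b) (farey_inv_r a)
  end.

Definition total_length (l : list (R * R)) : R :=
  fold_right (fun p acc => snd p - fst p + acc) 0 l.

Lemma total_length_app l1 l2 : total_length (l1 ++ l2) = total_length l1 + total_length l2.
Proof. induction l1 as [|p l1 IH]; simpl; [lra|]. rewrite IH; lra. Qed.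

Lemma total_length_preimage_intervals k a b :
  total_length (preimage_intervals k a b) = preimage_length k a b.
Proof.
  revert a b; induction k as [|k IH]; intros a b; simpl; [lra|].
  now rewrite total_length_app, !IH.
Qed.

Lemma preimage_intervals_cover k : forall a b x,
  0 <= a -> a <= b -> b <= 1 -> 0 <= x <= 1 -> a <= Nat.iter k farey x <= b ->
  exists p, In p (preimage_intervals k a b) /\ fst p <= x <= snd p.
Proof.
  induction k as [|k IH]; intros a b x Ha Hab Hb Hx H.
  - exists (a, b); simpl in *; auto.
  - simpl in H. simpl preimage_intervals.
    destruct (farey_preimage _ _ _ (iter_farey_range k x Hx) Ha H) as [H1|H1].
    + destruct (IH (farey_inv_l a) (farey_inv_l b) x) as [p [Hp Hpx]];
        auto using farey_inv_l_nonneg, farey_inv_l_le.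
      * apply farey_inv_l_le1; lra.
      * exists p; auto using in_or_app.
    + destruct (IH (farey_inv_r b) (farey_inv_r a) x) as [p [Hp Hpx]];
        auto using farey_inv_r_le.
      * left; apply farey_inv_r_pos; lra.
      * apply farey_inv_r_le1; lra.
      * exists p; auto using in_or_app.
Qed.

Lemma preimage_intervals_ordered k : forall a b,
  0 <= a -> a <= b -> forall p, In p (preimage_intervals k a b) -> fst p <= snd p.
Proof.
  induction k as [|k IH]; intros a b Ha Hab p Hp; simpl in Hp.
  - destruct Hp as [<-|[]]; auto.
  - apply in_app_or in Hp as [Hp|Hp]; eapply IH; try exact Hp.
    + now apply farey_inv_l_nonneg.
    + now apply farey_inv_l_le.
    + left; apply farey_inv_r_pos; lra.
    + now apply farey_inv_r_le.
Qed.

Lemma preimage_length_add k : forall a b c,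
  preimage_length k a b + preimage_length k b c = preimage_length k a c.
Proof.
  induction k as [|k IH]; intros a b c; simpl; [lra|].
  rewrite <- (IH (farey_inv_l a) (farey_inv_l b) (farey_inv_l c)),
          <- (IH (farey_inv_r c) (farey_inv_r b) (farey_inv_r a)); lra.
Qed.

Lemma preimage_length_refl k a : preimage_length k a a = 0.
Proof. pose proof (preimage_length_add k a a a); lra. Qed.

Lemma preimage_length_unit k : preimage_length k 0 1 = 1.
Proof.
  induction k as [|k IH]; simpl; [lra|].
  unfold farey_inv_l, farey_inv_r.
  replace (0 / (1 + 0)) with 0 by field. replace (1 / (1 + 0)) with 1 by field.
  now rewrite preimage_length_add.
Qed.

(* The inverse branches of [F^k] are unimodular Möbius maps with denominators
   [r x + s], [r, s] nonnegative integers; such a branch maps [[a, b]] onto an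
   interval of length [branch_length (r, s) a b]. *)
Fixpoint branch_denominators (k : nat) : list (nat * nat) :=
  match k with
  | O => (0, 1)%nat :: nil
  | S k' => map (fun p => (fst p + snd p, snd p)%nat) (branch_denominators k') ++
            map (fun p => (snd p, fst p + snd p)%nat) (branch_denominators k')
  end.

Definition branch_length (p : nat * nat) (a b : R) : R :=
  (b - a) / ((INR (fst p) * a + INR (snd p)) * (INR (fst p) * b + INR (snd p))).

Definition sum_branch_lengths (l : list (nat * nat)) (a b : R) : R :=
  fold_right (fun p acc => branch_length p a b + acc) 0 l.

Lemma sum_branch_lengths_app l1 l2 a b :
  sum_branch_lengths (l1 ++ l2) a b = sum_branch_lengths l1 a b + sum_branch_lengths l2 a b.
Proof. induction l1 as [|p l1 IH]; simpl; [lra|]. rewrite IH; lra. Qed.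

Lemma branch_denominators_snd_pos k p : In p (branch_denominators k) -> (1 <= snd p)%nat.
Proof.
  revert p; induction k as [|k IH]; simpl; intros p H.
  - destruct H as [<-|[]]; simpl; lia.
  - apply in_app_or in H as [H|H]; apply in_map_iff in H as [q [<- Hq]];
      simpl; specialize (IH q Hq); lia.
Qed.

Lemma sum_branch_lengths_map_l l a b :
  0 <= a -> 0 <= b -> (forall p, In p l -> (1 <= snd p)%nat) ->
  sum_branch_lengths (map (fun p => (fst p + snd p, snd p)%nat) l) a b =
  sum_branch_lengths l (farey_inv_l a) (farey_inv_l b).
Proof.
  intros Ha Hb H. induction l as [|[r s] l IH]; simpl; [reflexivity|].
  rewrite IH by (intros; apply H; simpl; auto). f_equal.
  assert (Hs : 1 <= INR s) by (apply (le_INR 1); exact (H (r, s) (or_introl eq_refl))).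
  pose proof (pos_INR r).
  unfold branch_length, farey_inv_l; simpl. rewrite plus_INR.
  field; repeat split; nra.
Qed.

Lemma sum_branch_lengths_map_r l a b :
  0 <= a -> 0 <= b -> (forall p, In p l -> (1 <= snd p)%nat) ->
  sum_branch_lengths (map (fun p => (snd p, fst p + snd p)%nat) l) a b =
  sum_branch_lengths l (farey_inv_r b) (farey_inv_r a).
Proof.
  intros Ha Hb H. induction l as [|[r s] l IH]; simpl; [reflexivity|].
  rewrite IH by (intros; apply H; simpl; auto). f_equal.
  assert (Hs : 1 <= INR s) by (apply (le_INR 1); exact (H (r, s) (or_introl eq_refl))).
  pose proof (pos_INR r).
  unfold branch_length, farey_inv_r; simpl. rewrite plus_INR.
  field; repeat split; nra.
Qed.

Lemma preimage_length_branches k : forall a b, 0 <= a -> 0 <= b ->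
  preimage_length k a b = sum_branch_lengths (branch_denominators k) a b.
Proof.
  induction k as [|k IH]; intros a b Ha Hb.
  - unfold sum_branch_lengths, branch_length; simpl; field.
  - pose proof (branch_denominators_snd_pos k).
    simpl; rewrite sum_branch_lengths_app, sum_branch_lengths_map_l,
      sum_branch_lengths_map_r by auto.
    rewrite !IH; auto using farey_inv_l_nonneg; left; apply farey_inv_r_pos; lra.
Qed.

Lemma preimage_length_nonneg k a b : 0 <= a <= b -> 0 <= preimage_length k a b.
Proof.
  intros Hab. rewrite preimage_length_branches by lra.
  pose proof (branch_denominators_snd_pos k) as H.
  induction (branch_denominators k) as [|[r s] l IH]; simpl; [lra|].
  assert (Hs : 1 <= INR s) by (apply (le_INR 1); exact (H (r, s) (or_introl eq_refl))).
  pose proof (pos_INR r).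
  assert (0 <= sum_branch_lengths l a b) by (apply IH; intros; apply H; simpl; auto).
  assert (0 <= branch_length (r, s) a b) by (apply Rdiv_nonneg_pos; simpl; [lra | apply Rmult_lt_0_compat; nra]).
  lra.
Qed.

(* Branchwise, [branch_length (r, s) (1/2) 1 = 1 / ((r + 2 s) (r + s))] and [r a + s <= r + 2 s]. *)
Lemma preimage_length_compress k a :
  1/2 <= a <= 1 -> (1 - a) * preimage_length k (1/2) 1 <= preimage_length k a 1.
Proof.
  intros Ha. rewrite !preimage_length_branches by lra.
  pose proof (branch_denominators_snd_pos k) as H.
  induction (branch_denominators k) as [|[r s] l IH]; simpl; [lra|].
  assert (Hs : 1 <= INR s) by (apply (le_INR 1); exact (H (r, s) (or_introl eq_refl))).
  pose proof (pos_INR r).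
  assert ((1 - a) * sum_branch_lengths l (1/2) 1 <= sum_branch_lengths l a 1)
    by (apply IH; intros; apply H; simpl; auto).
  assert ((1 - a) * branch_length (r, s) (1/2) 1 <= branch_length (r, s) a 1).
  { unfold branch_length; simpl.
    replace ((1 - 1/2) / ((INR r * (1/2) + INR s) * (INR r * 1 + INR s)))
      with (/ ((INR r + 2 * INR s) * (INR r + INR s))) by (field; nra).
    unfold Rdiv. apply Rmult_le_compat_l; [lra|].
    apply Rinv_le_contravar; [apply Rmult_lt_0_compat|apply Rmult_le_compat]; nra. }
  lra.
Qed.

(** * Outer measure of the cylinders *)

Lemma interval_cover_length_nonneg A s : interval_cover_length A s -> 0 <= s.
Proof.
  intros [a [b [Hab [_ Hs]]]].
  destruct (Rle_lt_dec 0 s) as [|Hlt]; [assumption|].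
  destruct (Hs (- s)) as [n Hn]; [lra|]. specialize (Hn n (le_n n)).
  assert (0 <= sum_f_R0 (fun i => b i - a i) n).
  { rewrite sum_f_R0_rsum. apply rsum_nonneg. intros i _. specialize (Hab i); lra. }
  unfold Rdist in Hn. rewrite Rabs_pos_eq in Hn; lra.
Qed.

Lemma lebesgue_measure_nonneg A m : lebesgue_measure_is A m -> 0 <= m.
Proof. intros [_ Hmax]. apply Hmax, interval_cover_length_nonneg. Qed.

Lemma infinite_sum_eventually_zero g n :
  (forall i, (n <= i)%nat -> g i = 0) -> infinite_sum g (rsum 0 n g).
Proof.
  intros H eps Heps. exists n. intros m Hm. rewrite sum_f_R0_rsum.
  replace (S m) with (n + (S m - n))%nat by lia. rewrite rsum_split.
  rewrite (rsum_ext (0 + n) _ g (fun _ => 0)) by (intros; apply H; lia).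
  rewrite rsum_const. unfold Rdist.
  replace (rsum 0 n g + INR (S m - n) * 0 - rsum 0 n g) with 0 by ring.
  rewrite Rabs_R0; lra.
Qed.

Lemma rsum_nth_total_length l :
  rsum 0 (length l) (fun i => snd (nth i l (0, 0)) - fst (nth i l (0, 0))) = total_length l.
Proof.
  induction l as [|p l IH]; [reflexivity|].
  simpl length. rewrite rsum_cons, <- (rsum_shift 0 (length l) 1). simpl.
  rewrite <- IH. f_equal. apply rsum_ext. intros i _. now rewrite Nat.add_1_r.
Qed.

(* Pad each closed interval of a finite cover by [d] on both sides. *)
Lemma closed_cover_interval_cover_length (A : R -> Prop) l d :
  0 < d -> (forall p, In p l -> fst p <= snd p) ->
  (forall x, A x -> exists p, In p l /\ fst p <= x <= snd p) ->
  interval_cover_length A (total_length l + 2 * INR (length l) * d).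
Proof.
  intros Hd Hord Hcov. set (n := length l).
  set (pad := fun i => if (i <? n)%nat then d else 0).
  exists (fun i => fst (nth i l (0, 0)) - pad i), (fun i => snd (nth i l (0, 0)) + pad i).
  split; [|split].
  - intros i. unfold pad. destruct (Nat.ltb_spec i n).
    + pose proof (Hord _ (nth_In l (0, 0) H)); lra.
    + rewrite nth_overflow by auto; simpl; lra.
  - intros x Hx. destruct (Hcov x Hx) as [p [Hp Hpx]].
    destruct (In_nth l p (0, 0) Hp) as [i [Hi <-]].
    exists i. unfold pad. destruct (Nat.ltb_spec i n); [lra | unfold n in *; lia].
  - replace (total_length l + 2 * INR n * d)
      with (rsum 0 n (fun i => snd (nth i l (0, 0)) + pad i - (fst (nth i l (0, 0)) - pad i))).
    + apply infinite_sum_eventually_zero. intros i Hi. unfold pad.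
      destruct (Nat.ltb_spec i n); [lia|]. rewrite nth_overflow by auto; simpl; lra.
    + rewrite (rsum_ext 0 n _ (fun i => snd (nth i l (0, 0)) - fst (nth i l (0, 0)) + 2 * d))
        by (intros i Hi; unfold pad; destruct (Nat.ltb_spec i n); [ring | lia]).
      rewrite rsum_plus, rsum_const. unfold n. rewrite rsum_nth_total_length; ring.
Qed.

Lemma lebesgue_measure_le_closed_cover A m l :
  lebesgue_measure_is A m -> (forall p, In p l -> fst p <= snd p) ->
  (forall x, A x -> exists p, In p l /\ fst p <= x <= snd p) ->
  m <= total_length l.
Proof.
  intros [Hlow _] Hord Hcov. apply Rle_plus_epsilon. intros eps Heps.
  pose proof (pos_INR (length l)).
  set (d := eps / (2 * (INR (length l) + 1))).
  assert (Hd : 0 < d) by (apply Rdiv_lt_0_compat; lra).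
  apply Rle_trans with (total_length l + 2 * INR (length l) * d).
  - now apply Hlow, closed_cover_interval_cover_length.
  - assert (2 * INR (length l) * d <= eps); [|lra].
    unfold d. apply (Rmult_le_reg_r (2 * (INR (length l) + 1))); [lra|].
    field_simplify; nra.
Qed.

Lemma farey_cyl_measure_bounds u k m : 0 < u <= 1 ->
  lebesgue_measure_is (farey_cyl u (S k)) m -> 0 <= m <= preimage_length k u 1.
Proof.
  intros Hu Hm. split; [eapply lebesgue_measure_nonneg; eassumption|].
  rewrite <- total_length_preimage_intervals.
  apply (lebesgue_measure_le_closed_cover _ _ _ Hm).
  - apply (preimage_intervals_ordered k u 1); lra.
  - intros x [Hx Hit]. replace (S k - 1)%nat with k in Hit by lia.
    apply preimage_intervals_cover; lra.
Qed.

(** * The sequence [λ(F^{-k}[1/2, 1])] *)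

Definition half_length (k : nat) : R := preimage_length k (1/2) 1.

Lemma half_length_nonneg k : 0 <= half_length k.
Proof. apply preimage_length_nonneg; lra. Qed.

Lemma preimage_length_inv_l_le k a b : 0 <= a <= b ->
  preimage_length k (farey_inv_l a) (farey_inv_l b) <= preimage_length (S k) a b.
Proof.
  intros Hab. simpl.
  assert (0 <= preimage_length k (farey_inv_r b) (farey_inv_r a)); [|lra].
  apply preimage_length_nonneg. split.
  - left; apply farey_inv_r_pos; lra.
  - apply farey_inv_r_le; lra.
Qed.

Lemma farey_inv_l_inv_succ m : farey_inv_l (/ INR (S m)) = / INR (S (S m)).
Proof.
  unfold farey_inv_l. pose proof (lt_0_INR (S m) ltac:(lia)).
  rewrite (S_INR (S m)). field; lra.
Qed.

(* [m] applications of [x ↦ x/(1+x)] carry [[1/(m+2), 1/(m+1)]] onto [[1/2, 1]]. *)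
Lemma strip_length_le k m :
  preimage_length k (/ INR (S (S m))) (/ INR (S m)) <= half_length (k + m).
Proof.
  revert k; induction m as [|m IH]; intros k.
  - rewrite Nat.add_0_r. unfold half_length. simpl INR.
    replace (/ (1 + 1)) with (1/2) by field. rewrite Rinv_1; lra.
  - replace (k + S m)%nat with (S k + m)%nat by lia.
    eapply Rle_trans; [|apply IH].
    pose proof (lt_0_INR (S m) ltac:(lia)). pose proof (lt_0_INR (S (S m)) ltac:(lia)).
    rewrite <- (farey_inv_l_inv_succ (S m)) at 1. rewrite <- (farey_inv_l_inv_succ m) at 2.
    apply preimage_length_inv_l_le.
    split; [left; now apply Rinv_0_lt_compat|].
    apply Rinv_le_contravar; [lra|]. apply le_INR; lia.
Qed.

Lemma preimage_length_inv_le k p :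
  preimage_length k (/ INR (S p)) 1 <= rsum 0 p (fun m => half_length (k + m)).
Proof.
  induction p as [|p IH]; simpl rsum.
  - change (INR 1) with 1. rewrite Rinv_1, preimage_length_refl; lra.
  - rewrite <- (preimage_length_add k _ (/ INR (S p)) 1).
    pose proof (strip_length_le k p). lra.
Qed.

(* [F^{-k}[0, 1/m]] splits into [[0, 1/(m+k)]] and, for each [i < k], a copy of
   [F^{-i}[d/(d+1), 1]] with [d = m + k - 1 - i]. *)
Lemma preimage_length_renewal k : forall m, (1 <= m)%nat ->
  preimage_length k 0 (/ INR m) =
  / INR (m + k) + rsum 0 k (fun i => preimage_length i (INR (m + k - 1 - i) / INR (S (m + k - 1 - i))) 1).
Proof.
  induction k as [|k IH]; intros m Hm.
  - simpl preimage_length. rewrite Nat.add_0_r. simpl rsum. lra.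
  - cbn [preimage_length]. pose proof (lt_0_INR m ltac:(lia)).
    replace (farey_inv_l 0) with 0 by (unfold farey_inv_l; field).
    replace (farey_inv_l (/ INR m)) with (/ INR (S m)) by (unfold farey_inv_l; rewrite S_INR; field; lra).
    replace (farey_inv_r 0) with 1 by (unfold farey_inv_r; field).
    replace (farey_inv_r (/ INR m)) with (INR m / INR (S m)) by (unfold farey_inv_r; rewrite S_INR; field; lra).
    rewrite IH by lia. cbn [rsum].
    replace (S m + k)%nat with (m + S k)%nat by lia.
    replace (m + S k - 1 - (0 + k))%nat with m by lia.
    rewrite Nat.add_0_l; lra.
Qed.

Lemma half_length_renewal_ineq k : rsum 0 k (fun i => half_length i / INR (S (k - i))) <= 1.
Proof.
  pose proof (preimage_length_renewal k 1 (le_n 1)) as H.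
  change (INR 1) with 1 in H. rewrite Rinv_1, preimage_length_unit in H.
  assert (0 < / INR (1 + k)) by (apply Rinv_0_lt_compat, lt_0_INR; lia).
  enough (rsum 0 k (fun i => half_length i / INR (S (k - i))) <=
          rsum 0 k (fun i => preimage_length i (INR (1 + k - 1 - i) / INR (S (1 + k - 1 - i))) 1)) by lra.
  apply rsum_le. intros i Hi. replace (1 + k - 1 - i)%nat with (k - i)%nat by lia.
  set (d := (k - i)%nat). assert (1 <= INR d) by (apply (le_INR 1); unfold d; lia).
  rewrite S_INR.
  eapply Rle_trans; [|apply preimage_length_compress].
  - unfold half_length. right.
    replace (1 - INR d / (INR d + 1)) with (/ (INR d + 1)) by (field; lra). unfold Rdiv; ring.
  - split; apply (Rmult_le_reg_r (INR d + 1)); try lra; field_simplify; lra.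
Qed.

Definition renewal_weight (m j : nat) : R :=
  if (j <? m)%nat then half_length j / INR (S (m - j)) else 0.

Lemma renewal_weight_nonneg m j : 0 <= renewal_weight m j.
Proof.
  unfold renewal_weight. destruct (Nat.ltb_spec j m); [|lra].
  apply Rdiv_nonneg_pos; [apply half_length_nonneg | apply lt_0_INR; lia].
Qed.

Lemma renewal_weight_row_le m a t : rsum a t (renewal_weight m) <= 1.
Proof.
  eapply Rle_trans; [|apply (half_length_renewal_ineq m)].
  apply Rle_trans with (rsum 0 (a + t) (renewal_weight m)).
  { rewrite rsum_split. simpl.
    assert (0 <= rsum 0 a (renewal_weight m)) by (apply rsum_nonneg; intros; apply renewal_weight_nonneg).
    lra. }
  destruct (Nat.le_gt_cases (a + t) m).
  - rewrite (rsum_ext 0 (a + t) _ (fun i => half_length i / INR (S (m - i)))).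
    + apply rsum_le_longer; auto. intros i _.
      apply Rdiv_nonneg_pos; [apply half_length_nonneg | apply lt_0_INR; lia].
    + intros i Hi. unfold renewal_weight. destruct (Nat.ltb_spec i m); [reflexivity|lia].
  - replace (a + t)%nat with (m + (a + t - m))%nat by lia. rewrite rsum_split.
    rewrite (rsum_ext (0 + m) _ _ (fun _ => 0)), rsum_const, Rmult_0_r, Rplus_0_r.
    + right. apply rsum_ext. intros i Hi. unfold renewal_weight.
      destruct (Nat.ltb_spec i m); [reflexivity|lia].
    + intros i Hi. unfold renewal_weight. destruct (Nat.ltb_spec i m); [lia|reflexivity].
Qed.

Lemma renewal_weight_col_ge a t j : (a <= j < a + t)%nat ->
  half_length j * ln ((INR t + 2) / 2) <= rsum (a + 1) (2 * t) (fun m => renewal_weight m j).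
Proof.
  intros Hj.
  replace (2 * t)%nat with ((j - a) + (t + (t - (j - a))))%nat by lia.
  rewrite !rsum_split. replace (a + 1 + (j - a))%nat with (1 + j)%nat by lia.
  assert (0 <= rsum (a + 1) (j - a) (fun m => renewal_weight m j))
    by (apply rsum_nonneg; intros; apply renewal_weight_nonneg).
  assert (0 <= rsum (1 + j + t) (t - (j - a)) (fun m => renewal_weight m j))
    by (apply rsum_nonneg; intros; apply renewal_weight_nonneg).
  enough (half_length j * ln ((INR t + 2) / 2) <= rsum (1 + j) t (fun m => renewal_weight m j))
    by lra.
  rewrite <- rsum_shift, (rsum_ext 1 t _ (fun i => half_length j * / INR (S i))).
  - rewrite rsum_scal. apply Rmult_le_compat_l; [apply half_length_nonneg | apply ln_le_harmonic].
  - intros i Hi. unfold renewal_weight. destruct (Nat.ltb_spec j (i + j)); [|lia].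
    replace (i + j - j)%nat with i by lia. reflexivity.
Qed.

Lemma half_length_block_le a t : (1 <= t)%nat ->
  rsum a t half_length * ln ((INR t + 2) / 2) <= 2 * INR t.
Proof.
  intros Ht.
  assert (Hrows : rsum (a + 1) (2 * t) (fun m => rsum a t (renewal_weight m)) <= 2 * INR t).
  { eapply Rle_trans; [apply (rsum_le _ _ _ (fun _ => 1)); intros; apply renewal_weight_row_le|].
    rewrite rsum_const, mult_INR; simpl; lra. }
  rewrite (rsum_swap (a + 1) (2 * t) a t renewal_weight) in Hrows.
  eapply Rle_trans; [|exact Hrows]. rewrite Rmult_comm, <- rsum_scal.
  apply rsum_le. intros j Hj. rewrite Rmult_comm. now apply renewal_weight_col_ge.
Qed.

(** * The logarithmic weights *)

Lemma inv_ln_block_antitone l1 l2 : (1 <= l1 <= l2)%nat ->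
  0 < / ln ((INR l2 + 2) / 2) <= / ln ((INR l1 + 2) / 2).
Proof.
  intros H. assert (1 <= INR l1 <= INR l2) by (split; [apply (le_INR 1) | apply le_INR]; lia).
  assert (0 < ln ((INR l1 + 2) / 2)) by (apply ln_pos; lra).
  split; [apply Rinv_0_lt_compat, ln_pos; lra|].
  apply Rinv_le_contravar; [assumption|]. apply ln_le; lra.
Qed.

Lemma rsum_inv_ln_block_le n s : (s <= n)%nat ->
  rsum 1 n (fun i => / ln ((INR (n - i + 1) + 2) / 2)) <=
  INR s * / ln ((INR 1 + 2) / 2) + INR n * / ln ((INR (S s) + 2) / 2).
Proof.
  intros Hs. replace n with ((n - s) + s)%nat at 1 by lia. rewrite rsum_split.
  pose proof (inv_ln_block_antitone (S s) (S s) ltac:(lia)).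
  assert (INR (n - s) <= INR n) by (apply le_INR; lia).
  assert (rsum 1 (n - s) (fun i => / ln ((INR (n - i + 1) + 2) / 2)) <= INR (n - s) * / ln ((INR (S s) + 2) / 2)).
  { rewrite <- (rsum_const 1 (n - s)). apply rsum_le. intros i Hi. apply inv_ln_block_antitone; lia. }
  assert (rsum (1 + (n - s)) s (fun i => / ln ((INR (n - i + 1) + 2) / 2)) <= INR s * / ln ((INR 1 + 2) / 2)).
  { rewrite <- (rsum_const (1 + (n - s)) s). apply rsum_le. intros i Hi. apply inv_ln_block_antitone; lia. }
  nra.
Qed.

Lemma ln_le_twice_ln_sqrt_succ n : (1 <= n)%nat -> ln (INR n) <= 2 * ln (INR (S (Nat.sqrt n))).
Proof.
  intros Hn. pose proof (Nat.sqrt_spec' n) as [_ Hlt].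
  assert (0 < INR (S (Nat.sqrt n))) by (apply lt_0_INR; lia).
  replace (2 * ln (INR (S (Nat.sqrt n)))) with (ln (INR (S (Nat.sqrt n)) * INR (S (Nat.sqrt n))))
    by (rewrite ln_mult; lra).
  rewrite <- mult_INR. apply ln_le; [apply lt_0_INR; lia | apply le_INR; lia].
Qed.

Lemma sqrt_le_n_div_ln n : (2 <= n)%nat -> INR (Nat.sqrt n) <= 2 * (INR n / ln (INR n)).
Proof.
  intros Hn. set (s := Nat.sqrt n).
  assert (Hs : (1 <= s)%nat) by (unfold s; rewrite <- Nat.sqrt_le_square; lia).
  assert (Hss : INR s * INR s <= INR n)
    by (rewrite <- mult_INR; apply le_INR, Nat.sqrt_spec'; lia).
  assert (Hln : 0 < ln (INR n)) by (apply ln_pos, (lt_INR 1); lia).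
  pose proof (ln_le_twice_ln_sqrt_succ n ltac:(lia)). fold s in H.
  assert (ln (INR (S s)) <= INR s) by (rewrite S_INR, Rplus_comm; apply ln_1p_le; pose proof (pos_INR s); lra).
  apply (Rmult_le_reg_r (ln (INR n))); [assumption|].
  replace (2 * (INR n / ln (INR n)) * ln (INR n)) with (2 * INR n) by (field; lra).
  pose proof (pos_INR s). nra.
Qed.

Lemma ln_le_ln_block_sqrt n : (1 <= n)%nat ->
  ln (INR n) <= 4 * ln ((INR (S (Nat.sqrt n)) + 2) / 2).
Proof.
  intros Hn. pose proof (ln_le_twice_ln_sqrt_succ n Hn).
  set (x := INR (S (Nat.sqrt n))) in *. assert (1 <= x) by (apply (le_INR 1); lia).
  assert (ln x <= 2 * ln ((x + 2) / 2)); [|lra].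
  replace (2 * ln ((x + 2) / 2)) with (ln ((x + 2) / 2 * ((x + 2) / 2))) by (rewrite ln_mult; lra).
  apply ln_le; nra.
Qed.

Lemma rsum_inv_ln_block_le_n_div_ln n : (2 <= n)%nat ->
  rsum 1 n (fun i => / ln ((INR (n - i + 1) + 2) / 2)) <= (2 / ln (3/2) + 4) * (INR n / ln (INR n)).
Proof.
  intros Hn. eapply Rle_trans; [apply (rsum_inv_ln_block_le n (Nat.sqrt n)), Nat.sqrt_le_lin|].
  replace ((INR 1 + 2) / 2) with (3/2) by (simpl; field).
  pose proof (sqrt_le_n_div_ln n Hn). pose proof (ln_le_ln_block_sqrt n ltac:(lia)).
  assert (H32 : 0 < ln (3/2)) by (apply ln_pos; lra).
  assert (Hln : 0 < ln (INR n)) by (apply ln_pos, (lt_INR 1); lia).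
  assert (Hlb : 0 < ln ((INR (S (Nat.sqrt n)) + 2) / 2))
    by (apply ln_pos; pose proof (pos_INR (Nat.sqrt n)); rewrite S_INR; lra).
  assert (0 <= INR n) by apply pos_INR.
  assert (INR (Nat.sqrt n) * / ln (3/2) <= 2 / ln (3/2) * (INR n / ln (INR n))).
  { replace (2 / ln (3/2) * (INR n / ln (INR n))) with (2 * (INR n / ln (INR n)) * / ln (3/2))
      by (field; lra).
    apply Rmult_le_compat_r; [left; now apply Rinv_0_lt_compat | assumption]. }
  set (L := ln ((INR (S (Nat.sqrt n)) + 2) / 2)) in *.
  assert (/ L <= 4 / ln (INR n)).
  { apply (Rmult_le_reg_r (ln (INR n) * L)); [nra|].
    replace (/ L * (ln (INR n) * L)) with (ln (INR n)) by (field; lra).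
    replace (4 / ln (INR n) * (ln (INR n) * L)) with (4 * L) by (field; lra). lra. }
  assert (INR n * / L <= 4 * (INR n / ln (INR n))).
  { replace (4 * (INR n / ln (INR n))) with (INR n * (4 / ln (INR n))) by (field; lra).
    now apply Rmult_le_compat_l. }
  lra.
Qed.

(* [-log(1 - K/M)] is dominated by [Σ_{i<=K} 1/(M-i)]; after exchanging the sums,
   the weight [1/(M-i) <= 1/l] of the tail block of length [l = n-i+1] cancels the
   factor [l] in the block bound. *)
Lemma weighted_log_sum_le (Q : nat -> R) (c : R) n M :
  (2 <= n)%nat -> (n < M)%nat -> 0 <= c -> (forall K, 0 <= Q K) ->
  (forall i l, (1 <= l)%nat -> rsum i l Q * ln ((INR l + 2) / 2) <= c * INR l) ->
  rsum 1 n (fun K => Q K * - ln (1 - INR K / INR M)) <=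
  c * (2 / ln (3/2) + 4) * (INR n / ln (INR n)).
Proof.
  intros Hn HM Hc HQ Hblock. set (g := fun i => / (INR M - INR i)).
  apply Rle_trans with (rsum 1 n (fun K => Q K * rsum 1 K g)).
  { apply rsum_le. intros K HK. apply Rmult_le_compat_l; [apply HQ|].
    apply neg_ln_le_harmonic; lia. }
  rewrite rsum_exchange_triangle.
  apply Rle_trans with (rsum 1 n (fun i => c * / ln ((INR (n - i + 1) + 2) / 2))).
  - apply rsum_le. intros i Hi. set (l := (n - i + 1)%nat).
    assert (Hl : 1 <= INR l <= INR M - INR i)
      by (split; [apply (le_INR 1) | rewrite <- minus_INR by lia; apply le_INR]; unfold l; lia).
    assert (HL : 0 < ln ((INR l + 2) / 2)) by (apply ln_pos; lra).
    assert (Hg : 0 <= g i <= / INR l)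
      by (unfold g; split; [left; apply Rinv_0_lt_compat | apply Rinv_le_contravar]; lra).
    assert (0 <= rsum i l Q) by (apply rsum_nonneg; auto).
    specialize (Hblock i l ltac:(unfold l; lia)).
    apply Rle_trans with (/ INR l * rsum i l Q); [apply Rmult_le_compat_r; lra|].
    apply (Rmult_le_reg_r (INR l * ln ((INR l + 2) / 2))); [nra|].
    replace (/ INR l * rsum i l Q * (INR l * ln ((INR l + 2) / 2)))
      with (rsum i l Q * ln ((INR l + 2) / 2)) by (field; lra).
    replace (c * / ln ((INR l + 2) / 2) * (INR l * ln ((INR l + 2) / 2)))
      with (c * INR l) by (field; lra).
    assumption.
  - rewrite rsum_scal, Rmult_assoc. apply Rmult_le_compat_l; [assumption|].
    now apply rsum_inv_ln_block_le_n_div_ln.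
Qed.

Lemma preimage_length_inv_block_le p i l : (1 <= l)%nat ->
  rsum i l (fun K => preimage_length K (/ INR (S p)) 1) * ln ((INR l + 2) / 2) <=
  2 * INR p * INR l.
Proof.
  intros Hl. set (L := ln ((INR l + 2) / 2)).
  assert (HL : 0 < L) by (apply ln_pos; pose proof (le_INR 1 l Hl); simpl in *; lra).
  assert (Hstrips : rsum i l (fun K => preimage_length K (/ INR (S p)) 1) <=
                    rsum 0 p (fun m => rsum (i + m) l half_length)).
  { eapply Rle_trans; [apply rsum_le; intros K _; apply preimage_length_inv_le|].
    rewrite rsum_swap. right. apply rsum_ext. intros m _. apply rsum_shift. }
  apply Rle_trans with (rsum 0 p (fun m => rsum (i + m) l half_length) * L);
    [apply Rmult_le_compat_r; lra|].
  rewrite Rmult_comm, <- rsum_scal.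
  replace (2 * INR p * INR l) with (INR p * (2 * INR l)) by ring. rewrite <- (rsum_const 0 p).
  apply rsum_le. intros m _. rewrite Rmult_comm. now apply half_length_block_le.
Qed.

Lemma abs_sum_log_le (lam Q : nat -> R) n M :
  (1 <= n)%nat -> (n < M)%nat -> (forall K, 0 <= lam K <= Q K) ->
  Rabs (sum_f_R0 (fun j => lam (S j) * ln (1 - INR (S j) / INR M)) (n - 1)) <=
  rsum 1 n (fun K => Q K * - ln (1 - INR K / INR M)).
Proof.
  intros Hn HM Hlam. eapply Rle_trans; [apply sum_f_R0_triangle|].
  rewrite sum_f_R0_rsum. replace (S (n - 1)) with n by lia.
  rewrite <- (rsum_shift 0 n 1). apply rsum_le. intros i Hi. rewrite Nat.add_1_r.
  assert (HK : INR (S i) < INR M) by (apply lt_INR; lia).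
  pose proof (lt_0_INR (S i) ltac:(lia)).
  assert (Hx : 0 < 1 - INR (S i) / INR M <= 1).
  { split.
    - replace (1 - INR (S i) / INR M) with ((INR M - INR (S i)) / INR M) by (field; lra).
      apply Rdiv_lt_0_compat; lra.
    - assert (0 <= INR (S i) / INR M) by (apply Rdiv_nonneg_pos; lra). lra. }
  assert (Hln : ln (1 - INR (S i) / INR M) <= 0) by (rewrite <- ln_1; apply ln_le; lra).
  destruct (Hlam (S i)).
  rewrite Rabs_mult, (Rabs_pos_eq (lam (S i))), (Rabs_left1 _ Hln) by lra.
  apply Rmult_le_compat_r; lra.
Qed.

Theorem mainTheorem11 (N : nat) (HN : (2 <= N)%nat) :
  exists (C : R) (n0 : nat),
    forall (n : nat), (n0 <= n)%nat -> (2 <= n)%nat ->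
    forall (lam : nat -> R),
      (forall k : nat, lebesgue_measure_is (farey_cyl (1 / INR N) (S k)) (lam k)) ->
      Rabs (sum_f_R0 (fun j => lam (S j) * ln (1 - INR (S j) / INR (n + N))) (n - 1))
        <= C * (INR n / ln (INR n)).
Proof.
  set (p := (N - 1)%nat).
  set (Q := fun K => preimage_length K (/ INR (S p)) 1).
  exists (2 * INR p * (2 / ln (3/2) + 4)), 2%nat. intros n _ Hn lam Hlam.
  assert (Hu : 1 / INR N = / INR (S p))
    by (unfold p; replace (S (N - 1)) with N by lia; unfold Rdiv; ring).
  assert (HuR : 0 < / INR (S p) <= 1).
  { pose proof (le_INR 1 (S p) ltac:(lia)). simpl INR in H at 1.
    split; [apply Rinv_0_lt_compat; lra | rewrite <- Rinv_1; apply Rinv_le_contravar; lra]. }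
  assert (Hlam_Q : forall K, 0 <= lam K <= Q K).
  { intros K. apply farey_cyl_measure_bounds; [assumption|]. rewrite <- Hu. apply Hlam. }
  eapply Rle_trans; [apply (abs_sum_log_le lam Q); [lia | lia | exact Hlam_Q]|].
  apply weighted_log_sum_le; [lia | lia | | |].
  - pose proof (pos_INR p); lra.
  - intros K. apply preimage_length_nonneg; lra.
  - intros i l Hl. apply preimage_length_inv_block_le, Hl.
Qed.
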